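(* For $|u|<1$, \[ - \operatorname{Li}_2 \left( \frac{2 u^2 - 3 u + \sqrt{ u (4-3u)}}{2 (u-1)^2} \right) - \operatorname{Li}_2 \left( \frac{2 u^2 - 3 u - \sqrt{ u (4-3u)}}{2 (u-1)^2} \right) = \frac{3}{2} \ln^2 \left( 1 - \frac{u - \sqrt{(4 - 3 u) u}}{2 (u-1)} \right) - \operatorname{Li}_2 \left( \frac{u}{u - 1} \right). \]
   Context: $\operatorname{Li}_2(x)=\sum_{n\ge1}x^n/n^2$ is the dilogarithm (analytically continued); square roots and logarithms are principal branches. *)

From Stdlib Require Import Reals.
From Coquelicot Require Import Coquelicot.
Open Scope R_scope.

(* Principal argument, with values in (-PI, PI]. *)
Definition Carg (z : C) : R :=
  let x := fst z in let y := snd z in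
  if Rlt_dec 0 x then atan (y / x)
  else if Rlt_dec x 0 then
    (if Rle_dec 0 y then atan (y / x) + PI else atan (y / x) - PI)
  else if Rlt_dec 0 y then PI / 2
  else if Rlt_dec y 0 then - (PI / 2)
  else 0.

(* Principal logarithm: Log z = ln |z| + i Arg z (value at 0 irrelevant). *)
Definition Clog (z : C) : C := (ln (Cmod z), Carg z).

Definition Cexp (z : C) : C :=
  (exp (fst z) * cos (snd z), exp (fst z) * sin (snd z)).

Definition Csqrt (z : C) : C :=
  if Ceq_dec z 0%C then 0%C else Cexp (Cdiv (Clog z) (RtoC 2)).

(* Dilogarithm (principal branch), via the standard integral representation
   Li2(z) = - int_0^z Log(1-s)/s ds = - int_0^1 Log(1 - t z)/t dt,
   which agrees with sum_{n>=1} z^n/n^2 for |z| <= 1 and is its analytic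
   continuation to C \ [1, +oo). *)
Definition Li2_integrand (z : C) (t : R) : C :=
  Cdiv (Clog (Cminus 1%C (Cmult (RtoC t) z))) (RtoC t).

Definition Li2 (z : C) : C :=
  Copp (RInt (fun t => fst (Li2_integrand z t)) 0 1,
        RInt (fun t => snd (Li2_integrand z t)) 0 1).

From Stdlib Require Import Reals Lra.
From Coquelicot Require Import Coquelicot.
Open Scope R_scope.

(* Put x = 1 - (u - s)/(2(u-1)) with s^2 = u(4-3u).  Then the two arguments of Li2 on the left
   are A(x) = x - x^2 and B(x) = (x-1)/x^2 = A(1/x), their product is u/(u-1), and
   C(x) = x + 1/x - 1 equals 1/(1-u), which has positive real part for |u| < 1.  So it suffices
   to prove -Li2(A) - Li2(B) = 3/2 Log(x)^2 - Li2(AB) on the region Re C(x) > 0, which is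
   star-shaped about x = 1.  Differentiating Li2 under the integral sign gives
   Li2'(w) = -Log(1-w)/w, and since 1 - A = x C, 1 - B = C/x and 1 - AB = C with x and C in the
   right half-plane, these logarithms split without branch corrections.  Hence the difference of
   the two sides has zero derivative along the segment from 1 to x, and it vanishes at x = 1. *)

Lemma is_derive_eq (f : R -> R) x l l' : is_derive f x l -> l = l' -> is_derive f x l'.
Proof. now intros H <-. Qed.

Lemma is_derive_Rmult (f g : R -> R) x a b :
  is_derive f x a -> is_derive g x b -> is_derive (fun r => f r * g r) x (a * g x + f x * b).
Proof. intros; apply (is_derive_mult f g); auto; apply Rmult_comm. Qed.

Lemma is_derive_atan_div (g h : R -> R) x a b :
  is_derive g x a -> is_derive h x b -> h x <> 0 ->
  is_derive (fun r => atan (g r / h r)) x ((a * h x - g x * b) / (h x ^ 2 + g x ^ 2)).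
Proof.
  intros Hg Hh Hn.
  assert (Hq : is_derive (fun r => g r / h r) x (a * / h x + g x * (- b / h x ^ 2)))
    by exact (is_derive_Rmult _ _ _ _ _ Hg (is_derive_inv _ _ _ Hh Hn)).
  apply (is_derive_eq _ _ _ _ (is_derive_comp atan _ _ _ _ (is_derive_atan _) Hq)).
  assert (0 < h x ^ 2) by (apply pow2_gt_0; exact Hn).
  unfold scal, Rsqr; simpl; unfold mult; simpl. field. split; [nra | exact Hn].
Qed.

Lemma continuous_locally_gt (g : R -> R) x c :
  continuous g x -> c < g x -> locally x (fun r => c < g r).
Proof.
  intros Hg H. apply Hg, (locally_open (fun y => c < y)); [apply open_gt | easy | exact H].
Qed.

Lemma continuous_locally_lt (g : R -> R) x c :
  continuous g x -> g x < c -> locally x (fun r => g r < c).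
Proof.
  intros Hg H. apply (Hg (fun y => y < c)), (locally_open (fun y => y < c));
    [apply open_lt | easy | exact H].
Qed.

Lemma is_derive_zero_const (g : R -> R) a b :
  (forall r, a <= r <= b -> ex_derive g r) -> (forall r, a < r < b -> is_derive g r 0) ->
  forall r, a <= r <= b -> g r = g a.
Proof.
  intros Hd H0.
  assert (D : forall r, a < r < b -> derivable_pt g r)
    by (intros r Hr; exists 0; apply is_derive_Reals, H0, Hr).
  apply (null_derivative_loc g a b D).
  - intros r Hr. apply continuity_pt_filterlim.
    apply (@ex_derive_continuous R_AbsRing R_NormedModule), Hd, Hr.
  - intros r Hr. apply derive_pt_eq_0, is_derive_Reals, H0, Hr.
Qed.

Lemma continuity_pt_difference_quotient (phi : R -> R) l :
  phi 0 = 0 -> derivable_pt_lim phi 0 l ->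
  continuity_pt (fun s => if Req_EM_T s 0 then l else phi s / s) 0.
Proof.
  intros H0 Hd eps Heps. destruct (Hd eps Heps) as [delta Hdl].
  exists delta; split; [apply cond_pos|]. intros s [_ Hs]. simpl in *. unfold R_dist in *.
  destruct (Req_EM_T 0 0) as [_|]; [|lra].
  destruct (Req_EM_T s 0) as [->|Hs0].
  - rewrite Rminus_eq_0, Rabs_R0; lra.
  - rewrite Rminus_0_r in Hs. specialize (Hdl s Hs0 Hs).
    now rewrite Rplus_0_l, H0, Rminus_0_r in Hdl.
Qed.

Lemma is_derive_RInt_param_explicit (f df : R -> R -> R) a b x : a <= b ->
  locally x (fun u => forall t, a <= t <= b -> is_derive (fun w => f w t) u (df u t)) ->
  (forall t, a <= t <= b -> locally_2d (fun u v => is_derive (fun w => f w v) u (df u v)) x t) ->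
  (forall t, a <= t <= b -> continuity_2d_pt df x t) ->
  locally x (fun u => ex_RInt (f u) a b) ->
  is_derive (fun u => RInt (f u) a b) x (RInt (df x) a b).
Proof.
  intros Hab Hd Hd2 Hc Hi.
  rewrite (RInt_ext (df x) (fun t => Derive (fun u => f u t) x)).
  - apply is_derive_RInt_param; [| |exact Hi].
    + eapply filter_imp; [|exact Hd]. intros u Hu t Ht.
      rewrite Rmin_left, Rmax_right in Ht by exact Hab. exists (df u t). exact (Hu t Ht).
    + intros t Ht. rewrite Rmin_left, Rmax_right in Ht by exact Hab.
      apply (continuity_2d_pt_ext_loc df); [|exact (Hc t Ht)].
      eapply locally_2d_impl; [|exact (Hd2 t Ht)].
      apply locally_2d_forall. intros u v H. symmetry. now apply is_derive_unique.
  - intros t Ht. rewrite Rmin_left, Rmax_right in Ht by exact Hab.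
    symmetry. apply is_derive_unique, (locally_singleton _ _ Hd). lra.
Qed.

Lemma locally_locally_2d (P : R -> Prop) x y : locally x P -> locally_2d (fun u _ => P u) x y.
Proof. intros [eps H]. exists eps. intros u v Hu _. now apply H. Qed.

Lemma normsq_pos (z : C) : z <> 0%C -> 0 < fst z ^ 2 + snd z ^ 2.
Proof.
  intros Hz. destruct z as [p q]; simpl.
  destruct (Req_dec p 0) as [->|Hp]; [destruct (Req_dec q 0) as [->|Hq]|].
  - now contradict Hz.
  - assert (0 < q ^ 2) by (apply pow2_gt_0; exact Hq). nra.
  - assert (0 < p ^ 2) by (apply pow2_gt_0; exact Hp). nra.
Qed.

Lemma RtoC_neq0 r : r <> 0 -> RtoC r <> 0%C.
Proof. intros Hr E. apply Hr. exact (f_equal fst E). Qed.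

Lemma re_pos_neq0 (x : C) : 0 < fst x -> x <> 0%C.
Proof. intros H E. subst. simpl in H. lra. Qed.

Lemma Cinv_neq0 (z : C) : z <> 0%C -> (/ z)%C <> 0%C.
Proof.
  intros Hz E. pose proof (Cinv_r z Hz) as H1. rewrite E, Cmult_0_r in H1.
  apply R1_neq_R0. symmetry. exact (f_equal fst H1).
Qed.

Lemma re_inv_pos (x : C) : 0 < fst x -> 0 < fst (/ x)%C.
Proof. destruct x as [p q]; simpl. intros Hp. apply Rdiv_lt_0_compat; nra. Qed.

Lemma Cmod_lt_1_re_lt_1 (u : C) : Cmod u < 1 -> fst u < 1.
Proof.
  intros H. pose proof (re_le_Cmod u). pose proof (Rle_abs (Re u)). unfold Re in *. lra.
Qed.

(** * Complex-valued functions of a real variable *)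

Definition is_derive_C (f : R -> C) (x : R) (l : C) : Prop :=
  is_derive (fun r => fst (f r)) x (fst l) /\ is_derive (fun r => snd (f r)) x (snd l).

Definition continuous_C (f : R -> C) (x : R) : Prop :=
  continuous (fun r => fst (f r)) x /\ continuous (fun r => snd (f r)) x.

Lemma is_derive_C_eq (f : R -> C) x (l l' : C) :
  is_derive_C f x l -> l = l' -> is_derive_C f x l'.
Proof. now intros H <-. Qed.

Lemma is_derive_C_ext_loc (f g : R -> C) x (l : C) :
  locally x (fun r => f r = g r) -> is_derive_C f x l -> is_derive_C g x l.
Proof.
  intros E [H1 H2]; split.
  - exact (is_derive_ext_loc _ _ _ _ (filter_imp _ _ (fun r Hr => f_equal fst Hr) E) H1).
  - exact (is_derive_ext_loc _ _ _ _ (filter_imp _ _ (fun r Hr => f_equal snd Hr) E) H2).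
Qed.

Lemma is_derive_C_continuous (f : R -> C) x (l : C) :
  is_derive_C f x l -> continuous_C f x.
Proof.
  intros [H1 H2]; split; apply (@ex_derive_continuous R_AbsRing R_NormedModule);
    eexists; eassumption.
Qed.

Lemma is_derive_C_const (c : C) x : is_derive_C (fun _ => c) x 0%C.
Proof. split; exact (is_derive_const _ x). Qed.

Lemma is_derive_C_RtoC x : is_derive_C RtoC x 1%C.
Proof. split; [exact (is_derive_id x) | exact (is_derive_const _ x)]. Qed.

Lemma is_derive_C_plus (f g : R -> C) x (a b : C) :
  is_derive_C f x a -> is_derive_C g x b -> is_derive_C (fun r => f r + g r)%C x (a + b)%C.
Proof. intros [? ?] [? ?]; split; now apply @is_derive_plus. Qed.

Lemma is_derive_C_opp (f : R -> C) x (a : C) :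
  is_derive_C f x a -> is_derive_C (fun r => - f r)%C x (- a)%C.
Proof. intros [? ?]; split; now apply @is_derive_opp. Qed.

Lemma is_derive_C_minus (f g : R -> C) x (a b : C) :
  is_derive_C f x a -> is_derive_C g x b -> is_derive_C (fun r => f r - g r)%C x (a - b)%C.
Proof. intros; now apply is_derive_C_plus, is_derive_C_opp. Qed.

Lemma is_derive_C_mult (f g : R -> C) x (a b : C) :
  is_derive_C f x a -> is_derive_C g x b ->
  is_derive_C (fun r => f r * g r)%C x (a * g x + f x * b)%C.
Proof.
  intros [? ?] [? ?]; split; simpl.
  - replace (_ + _) with ((fst a * fst (g x) + fst (f x) * fst b)
                          - (snd a * snd (g x) + snd (f x) * snd b)) by ring.
    now apply @is_derive_minus; apply is_derive_Rmult.
  - replace (_ + _) with ((fst a * snd (g x) + fst (f x) * snd b)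
                          + (snd a * fst (g x) + snd (f x) * fst b)) by ring.
    now apply @is_derive_plus; apply is_derive_Rmult.
Qed.

Lemma is_derive_C_normsq (f : R -> C) x (l : C) : is_derive_C f x l ->
  is_derive (fun r => fst (f r) ^ 2 + snd (f r) ^ 2) x
    (2 * (fst (f x) * fst l + snd (f x) * snd l)).
Proof.
  intros [H1 H2].
  replace (2 * _) with (INR 2 * fst l * fst (f x) ^ 1 + INR 2 * snd l * snd (f x) ^ 1)
    by (simpl; ring).
  now apply @is_derive_plus; apply is_derive_pow.
Qed.

Lemma is_derive_C_inv (f : R -> C) x (a : C) :
  is_derive_C f x a -> f x <> 0%C -> is_derive_C (fun r => / f r)%C x (- a / (f x * f x))%C.
Proof.
  intros Hf Hn. pose proof (normsq_pos _ Hn) as HN.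
  pose proof (is_derive_C_normsq f x a Hf) as DN. destruct Hf as [H1 H2].
  pose proof (is_derive_inv _ _ _ DN (Rgt_not_eq _ _ HN)) as DI.
  pose proof (is_derive_Rmult _ _ _ _ _ H1 DI) as D1.
  assert (H2' : is_derive (fun r => - snd (f r)) x (- snd a)) by apply (is_derive_opp _ _ _ H2).
  pose proof (is_derive_Rmult _ _ _ _ _ H2' DI) as D2.
  split; unfold Cinv; simpl; [apply (is_derive_eq _ _ _ _ D1) | apply (is_derive_eq _ _ _ _ D2)];
    set (z := f x) in *; clearbody z; destruct z as [p q], a as [a1 a2]; simpl in *; field; nra.
Qed.

Lemma is_derive_C_zero_const (G : R -> C) a b :
  (forall r, a <= r <= b -> exists l, is_derive_C G r l) ->
  (forall r, a < r < b -> is_derive_C G r 0%C) ->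
  forall r, a <= r <= b -> G r = G a.
Proof.
  intros Hd H0 r Hr. apply injective_projections.
  - apply (is_derive_zero_const (fun s => fst (G s)) a b); [| |exact Hr].
    + intros s Hs. destruct (Hd s Hs) as [l [H _]]. now exists (fst l).
    + intros s Hs. exact (proj1 (H0 s Hs)).
  - apply (is_derive_zero_const (fun s => snd (G s)) a b); [| |exact Hr].
    + intros s Hs. destruct (Hd s Hs) as [l [_ H]]. now exists (snd l).
    + intros s Hs. exact (proj2 (H0 s Hs)).
Qed.

Definition CRInt (g : R -> C) (a b : R) : C :=
  (RInt (fun t => fst (g t)) a b, RInt (fun t => snd (g t)) a b).

Definition ex_CRInt (g : R -> C) (a b : R) : Prop :=
  ex_RInt (fun t => fst (g t)) a b /\ ex_RInt (fun t => snd (g t)) a b.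

Lemma ex_CRInt_continuous (g : R -> C) a b : a <= b ->
  (forall t, a <= t <= b -> continuous_C g t) -> ex_CRInt g a b.
Proof.
  intros Hab Hg. split; apply (@ex_RInt_continuous R_CompleteNormedModule); intros t Ht;
    rewrite Rmin_left, Rmax_right in Ht by exact Hab; apply (Hg t Ht).
Qed.

Lemma CRInt_ext (g h : R -> C) a b : a <= b ->
  (forall t, a < t < b -> g t = h t) -> CRInt g a b = CRInt h a b.
Proof.
  intros Hab E. unfold CRInt. f_equal; apply RInt_ext; intros t Ht;
    rewrite Rmin_left, Rmax_right in Ht by exact Hab; now rewrite E.
Qed.

Lemma CRInt_Cmult_l (c : C) (g : R -> C) a b : ex_CRInt g a b ->
  CRInt (fun t => c * g t)%C a b = (c * CRInt g a b)%C.
Proof.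
  intros [E1 E2]. pose proof (RInt_correct _ _ _ E1) as I1. pose proof (RInt_correct _ _ _ E2) as I2.
  destruct c as [c1 c2].
  unfold CRInt. apply injective_projections; simpl; apply is_RInt_unique.
  - exact (is_RInt_minus _ _ _ _ _ _ (is_RInt_scal _ _ _ c1 _ I1) (is_RInt_scal _ _ _ c2 _ I2)).
  - exact (is_RInt_plus _ _ _ _ _ _ (is_RInt_scal _ _ _ c1 _ I2) (is_RInt_scal _ _ _ c2 _ I1)).
Qed.

Lemma CRInt_derive (F f : R -> C) a b : a <= b ->
  (forall t, a <= t <= b -> is_derive_C F t (f t)) ->
  (forall t, a <= t <= b -> continuous_C f t) ->
  CRInt f a b = (F b - F a)%C.
Proof.
  intros Hab Hd Hc. unfold CRInt.
  apply injective_projections; simpl; apply is_RInt_unique.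
  - apply (is_RInt_derive (fun t => fst (F t))); intros t Ht;
      rewrite Rmin_left, Rmax_right in Ht by exact Hab; [apply Hd | apply Hc]; exact Ht.
  - apply (is_RInt_derive (fun t => snd (F t))); intros t Ht;
      rewrite Rmin_left, Rmax_right in Ht by exact Hab; [apply Hd | apply Hc]; exact Ht.
Qed.

Definition continuity_2d_pt_C (F : R -> R -> C) (x y : R) : Prop :=
  continuity_2d_pt (fun u v => fst (F u v)) x y /\ continuity_2d_pt (fun u v => snd (F u v)) x y.

Lemma continuity_2d_pt_C_const (c : C) x y : continuity_2d_pt_C (fun _ _ => c) x y.
Proof. split; apply continuity_2d_pt_const. Qed.

Lemma continuity_2d_pt_C_RtoC_id2 x y : continuity_2d_pt_C (fun _ (v : R) => RtoC v) x y.
Proof. split; [apply continuity_2d_pt_id2 | exact (continuity_2d_pt_const x y 0)]. Qed.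

Lemma continuity_2d_pt_C_comp1 (z : R -> C) x y :
  continuous_C z x -> continuity_2d_pt_C (fun u _ => z u) x y.
Proof.
  intros [H1 H2]; split; apply continuity_1d_2d_pt_comp with (g := fun u _ => u);
    try apply continuity_2d_pt_id1; now apply continuity_pt_filterlim.
Qed.

Lemma continuity_2d_pt_C_plus (F G : R -> R -> C) x y :
  continuity_2d_pt_C F x y -> continuity_2d_pt_C G x y ->
  continuity_2d_pt_C (fun u v => F u v + G u v)%C x y.
Proof. intros [? ?] [? ?]; split; now apply continuity_2d_pt_plus. Qed.

Lemma continuity_2d_pt_C_opp (F : R -> R -> C) x y :
  continuity_2d_pt_C F x y -> continuity_2d_pt_C (fun u v => - F u v)%C x y.
Proof. intros [? ?]; split; now apply continuity_2d_pt_opp. Qed.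

Lemma continuity_2d_pt_C_mult (F G : R -> R -> C) x y :
  continuity_2d_pt_C F x y -> continuity_2d_pt_C G x y ->
  continuity_2d_pt_C (fun u v => F u v * G u v)%C x y.
Proof.
  intros [? ?] [? ?]; split; simpl;
    [apply continuity_2d_pt_minus | apply continuity_2d_pt_plus];
    now apply continuity_2d_pt_mult.
Qed.

Lemma continuity_2d_pt_C_inv (F : R -> R -> C) x y :
  continuity_2d_pt_C F x y -> F x y <> 0%C -> continuity_2d_pt_C (fun u v => / F u v)%C x y.
Proof.
  intros [H1 H2] Hn. pose proof (normsq_pos _ Hn) as HN.
  assert (HI : continuity_2d_pt (fun u v => / (fst (F u v) ^ 2 + snd (F u v) ^ 2)) x y).
  { apply continuity_2d_pt_inv; [|lra].
    apply continuity_2d_pt_plus; simpl; repeat apply continuity_2d_pt_mult;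
      auto using continuity_2d_pt_const. }
  split; unfold Cinv; simpl; apply continuity_2d_pt_mult; auto using continuity_2d_pt_opp.
Qed.

Lemma is_derive_C_RInt_param (f df : R -> R -> C) a b x : a <= b ->
  locally x (fun u => forall t, a <= t <= b -> is_derive_C (fun w => f w t) u (df u t)) ->
  (forall t, a <= t <= b -> locally_2d (fun u v => is_derive_C (fun w => f w v) u (df u v)) x t) ->
  (forall t, a <= t <= b -> continuity_2d_pt_C df x t) ->
  locally x (fun u => ex_CRInt (f u) a b) ->
  is_derive_C (fun u => CRInt (f u) a b) x (CRInt (df x) a b).
Proof.
  intros Hab Hd Hd2 Hc Hi. split.
  - apply (is_derive_RInt_param_explicit (fun u t => fst (f u t)) (fun u t => fst (df u t)) a b x Hab).
    + eapply filter_imp; [|exact Hd]. intros u Hu t Ht. exact (proj1 (Hu t Ht)).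
    + intros t Ht. eapply locally_2d_impl; [|exact (Hd2 t Ht)].
      apply locally_2d_forall. now intros u v [H _].
    + intros t Ht. exact (proj1 (Hc t Ht)).
    + eapply filter_imp; [|exact Hi]. now intros u [H _].
  - apply (is_derive_RInt_param_explicit (fun u t => snd (f u t)) (fun u t => snd (df u t)) a b x Hab).
    + eapply filter_imp; [|exact Hd]. intros u Hu t Ht. exact (proj2 (Hu t Ht)).
    + intros t Ht. eapply locally_2d_impl; [|exact (Hd2 t Ht)].
      apply locally_2d_forall. now intros u v [_ H].
    + intros t Ht. exact (proj2 (Hc t Ht)).
    + eapply filter_imp; [|exact Hi]. now intros u [_ H].
Qed.

(** * The principal logarithm and square root *)

Definition in_slit_plane (w : C) : Prop := 0 < fst w \/ snd w <> 0.

Lemma slit_plane_neq0 w : in_slit_plane w -> w <> 0%C.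
Proof. intros [H|H] E; subst; simpl in H; lra. Qed.

Lemma slit_plane_re_pos (w : C) : 0 < fst w -> in_slit_plane w.
Proof. now left. Qed.

Lemma slit_plane_mult_re_pos (p q : C) : 0 < fst p -> 0 < fst q -> in_slit_plane (p * q)%C.
Proof.
  destruct p as [a b], q as [c d]; unfold in_slit_plane; simpl. intros Ha Hc.
  destruct (Req_dec (a * d + b * c) 0) as [E|E]; [left|right; exact E].
  assert (a * (a * c - b * d) = (a * a + b * b) * c)
    by (replace (a * (a * c - b * d)) with (a * a * c - b * (a * d)) by ring;
        replace (a * d) with (- (b * c)) by lra; ring).
  assert (0 < (a * a + b * b) * c) by (apply Rmult_lt_0_compat; nra).
  nra.
Qed.

Lemma continuous_C_locally_slit_plane (f : R -> C) x :
  continuous_C f x -> in_slit_plane (f x) -> locally x (fun r => in_slit_plane (f r)).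
Proof.
  intros [H1 H2] [H|H].
  - apply (filter_imp (fun r => 0 < fst (f r))); [now left|].
    now apply continuous_locally_gt.
  - destruct (Rlt_dec 0 (snd (f x))) as [Hp|Hn].
    + apply (filter_imp (fun r => 0 < snd (f r))); [intros r Hr; right; lra|].
      now apply continuous_locally_gt.
    + apply (filter_imp (fun r => snd (f r) < 0)); [intros r Hr; right; lra|].
      apply continuous_locally_lt; [exact H2 | lra].
Qed.

Lemma continuity_2d_pt_C_locally_slit_plane (F : R -> R -> C) x y :
  continuity_2d_pt_C F x y -> in_slit_plane (F x y) ->
  locally_2d (fun u v => in_slit_plane (F u v)) x y.
Proof.
  intros [H1 H2] [H|H].
  - destruct (H1 (mkposreal _ H)) as [d Hd]. exists d. intros u v Hu Hv.
    left. specialize (Hd u v Hu Hv). apply Rabs_def2 in Hd. simpl in Hd. lra.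
  - eapply locally_2d_impl; [|exact (continuity_2d_pt_neq_0 _ _ _ H2 H)].
    apply locally_2d_forall. now right.
Qed.

Lemma Carg_re_pos (w : C) : 0 < fst w -> Carg w = atan (snd w / fst w).
Proof. destruct w as [p q]; unfold Carg; simpl. now destruct (Rlt_dec 0 p). Qed.

Lemma Carg_im_pos (w : C) : 0 < snd w -> Carg w = PI / 2 - atan (fst w / snd w).
Proof.
  destruct w as [p q]; unfold Carg; simpl; intros H.
  destruct (Rlt_dec 0 p) as [Hp|Hp]; [|destruct (Rlt_dec p 0) as [Hn|Hn]].
  - replace (q / p) with (/ (p / q)) by (field; lra).
    apply atan_inv, Rdiv_lt_0_compat; lra.
  - destruct (Rle_dec 0 q) as [_|]; [|lra].
    replace (q / p) with (- / (- p / q)) by (field; lra).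
    replace (p / q) with (- (- p / q)) by (field; lra).
    rewrite !atan_opp, atan_inv by (apply Rdiv_lt_0_compat; lra). lra.
  - replace p with 0 by lra. destruct (Rlt_dec 0 q); [|lra].
    unfold Rdiv; rewrite Rmult_0_l, atan_0; ring.
Qed.

Lemma Carg_im_neg (w : C) : snd w < 0 -> Carg w = - (PI / 2) - atan (fst w / snd w).
Proof.
  destruct w as [p q]; unfold Carg; simpl; intros H.
  destruct (Rlt_dec 0 p) as [Hp|Hp]; [|destruct (Rlt_dec p 0) as [Hn|Hn]].
  - replace (q / p) with (- / (p / - q)) by (field; lra).
    replace (p / q) with (- (p / - q)) by (field; lra).
    rewrite !atan_opp, atan_inv by (apply Rdiv_lt_0_compat; lra). lra.
  - destruct (Rle_dec 0 q) as [|_]; [lra|].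
    replace (q / p) with (/ (- p / - q)) by (field; lra).
    replace (p / q) with (- p / - q) by (field; lra).
    rewrite atan_inv by (apply Rdiv_lt_0_compat; lra). lra.
  - replace p with 0 by lra. destruct (Rlt_dec 0 q); [lra|].
    destruct (Rlt_dec q 0); [|lra].
    unfold Rdiv; rewrite Rmult_0_l, atan_0; ring.
Qed.

Lemma is_derive_ln_Cmod (f : R -> C) x (l : C) : is_derive_C f x l -> f x <> 0%C ->
  is_derive (fun r => ln (Cmod (f r))) x (fst (l / f x)%C).
Proof.
  intros Hf Hn. pose proof (normsq_pos _ Hn) as HN.
  pose proof (is_derive_C_normsq f x l Hf) as DN. unfold Cmod.
  apply (is_derive_eq _ _ _ _ (is_derive_comp ln (fun r => sqrt (fst (f r) ^ 2 + snd (f r) ^ 2)) _ _ _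
                                 (is_derive_ln _ (sqrt_lt_R0 _ HN)) (is_derive_sqrt _ _ _ DN HN))).
  pose proof (sqrt_sqrt _ (Rlt_le _ _ HN)) as Hsq. pose proof (sqrt_lt_R0 _ HN).
  set (S := sqrt _) in *. set (z := f x) in *. clearbody z S.
  destruct z as [p q], l as [a1 a2]. unfold scal; simpl in *; unfold mult; simpl.
  rewrite <- Hsq. field. nra.
Qed.

Lemma is_derive_Carg (f : R -> C) x (l : C) : is_derive_C f x l -> in_slit_plane (f x) ->
  is_derive (fun r => Carg (f r)) x (snd (l / f x)%C).
Proof.
  intros Hf Hs. pose proof (is_derive_C_continuous f x l Hf) as [C1 C2]. destruct Hf as [H1 H2].
  destruct Hs as [Hre|Him]; [|destruct (Rlt_dec 0 (snd (f x))) as [Hp|Hn]].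
  - apply (is_derive_ext_loc (fun r => atan (snd (f r) / fst (f r)))).
    { apply (filter_imp (fun r => 0 < fst (f r))); [|now apply continuous_locally_gt].
      intros r Hr. now rewrite Carg_re_pos. }
    apply (is_derive_eq _ _ _ _ (is_derive_atan_div _ _ _ _ _ H2 H1 (Rgt_not_eq _ _ Hre))).
    set (z := f x) in *. clearbody z. destruct z as [p q], l as [a1 a2]. simpl in *.
    field. nra.
  - apply (is_derive_ext_loc (fun r => PI / 2 - atan (fst (f r) / snd (f r)))).
    { apply (filter_imp (fun r => 0 < snd (f r))); [|now apply continuous_locally_gt].
      intros r Hr. now rewrite Carg_im_pos. }
    apply (is_derive_eq _ _ _ _ (is_derive_minus _ _ _ _ _ (is_derive_const _ _)
             (is_derive_atan_div _ _ _ _ _ H1 H2 Him))).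
    set (z := f x) in *. clearbody z. destruct z as [p q], l as [a1 a2]. simpl in *.
    unfold minus, plus, opp, zero; simpl. field. nra.
  - apply (is_derive_ext_loc (fun r => - (PI / 2) - atan (fst (f r) / snd (f r)))).
    { apply (filter_imp (fun r => snd (f r) < 0)); [|apply continuous_locally_lt; [exact C2 | lra]].
      intros r Hr. now rewrite Carg_im_neg. }
    apply (is_derive_eq _ _ _ _ (is_derive_minus _ _ _ _ _ (is_derive_const _ _)
             (is_derive_atan_div _ _ _ _ _ H1 H2 Him))).
    set (z := f x) in *. clearbody z. destruct z as [p q], l as [a1 a2]. simpl in *.
    unfold minus, plus, opp, zero; simpl. field. nra.
Qed.

Lemma is_derive_C_Clog (f : R -> C) x (l : C) :
  is_derive_C f x l -> in_slit_plane (f x) -> is_derive_C (fun r => Clog (f r)) x (l / f x)%C.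
Proof.
  intros Hf Hs. split; [apply is_derive_ln_Cmod, slit_plane_neq0 | apply is_derive_Carg]; assumption.
Qed.

Lemma Clog_1 : Clog 1%C = 0%C.
Proof.
  unfold Clog. rewrite Cmod_1, ln_1, Carg_re_pos by (simpl; lra). simpl.
  unfold Rdiv. now rewrite Rmult_0_l, atan_0.
Qed.

Lemma Clog_mult_along_path (f g df dg : R -> C) a b :
  (forall r, a <= r <= b -> is_derive_C f r (df r) /\ is_derive_C g r (dg r)) ->
  (forall r, a <= r <= b -> 0 < fst (f r) /\ 0 < fst (g r)) ->
  f a = RtoC 1 -> g a = RtoC 1 ->
  forall r, a <= r <= b -> Clog (f r * g r) = (Clog (f r) + Clog (g r))%C.
Proof.
  intros Hd Hre Hfa Hga.
  assert (HD : forall r, a <= r <= b ->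
    is_derive_C (fun s => Clog (f s * g s) - Clog (f s) - Clog (g s))%C r 0%C).
  { intros r Hr. destruct (Hd r Hr) as [Hf Hg]. destruct (Hre r Hr) as [Pf Pg].
    pose proof (slit_plane_neq0 _ (slit_plane_re_pos _ Pf)).
    pose proof (slit_plane_neq0 _ (slit_plane_re_pos _ Pg)).
    eapply is_derive_C_eq.
    - apply is_derive_C_minus; [apply is_derive_C_minus|].
      + apply is_derive_C_Clog;
          [apply (is_derive_C_mult _ _ _ _ _ Hf Hg) | now apply slit_plane_mult_re_pos].
      + apply is_derive_C_Clog; [exact Hf | now apply slit_plane_re_pos].
      + apply is_derive_C_Clog; [exact Hg | now apply slit_plane_re_pos].
    - cbv beta. field. split; assumption. }
  intros r Hr.
  pose proof (is_derive_C_zero_const _ a b (fun s Hs => ex_intro _ _ (HD s Hs))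
                (fun s Hs => HD s (conj (Rlt_le _ _ (proj1 Hs)) (Rlt_le _ _ (proj2 Hs)))) r Hr) as E.
  cbv beta in E. rewrite Hfa, Hga, Cmult_1_l, Clog_1 in E.
  replace (Clog (f r * g r))
    with ((Clog (f r * g r) - Clog (f r) - Clog (g r)) + Clog (f r) + Clog (g r))%C by ring.
  rewrite E. ring.
Qed.

Lemma polar_atan k t : 0 < k ->
  sqrt (k * k * (1 + t²)) * cos (atan t) = k /\ sqrt (k * k * (1 + t²)) * sin (atan t) = k * t.
Proof.
  intros Hk. rewrite sqrt_mult_alt, sqrt_square, cos_atan, sin_atan by nra.
  assert (0 < sqrt (1 + t²)) by (apply sqrt_lt_R0; unfold Rsqr; nra).
  split; field; lra.
Qed.

Lemma Cmod_cos_sin_Carg (z : C) : z <> 0%C ->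
  Cmod z * cos (Carg z) = fst z /\ Cmod z * sin (Carg z) = snd z.
Proof.
  destruct z as [p q]; intros Hz. unfold Cmod; simpl.
  destruct (Rlt_dec 0 p) as [Hp|Hp]; [|destruct (Rlt_dec 0 q) as [Hq|Hq]].
  - rewrite Carg_re_pos by exact Hp; simpl.
    replace (p * (p * 1) + q * (q * 1)) with (p * p * (1 + (q / p)²)) by (unfold Rsqr; field; lra).
    destruct (polar_atan p (q / p) Hp) as [-> ->]. split; [easy | field; lra].
  - rewrite Carg_im_pos, cos_shift, sin_shift by exact Hq; simpl.
    replace (p * (p * 1) + q * (q * 1)) with (q * q * (1 + (p / q)²)) by (unfold Rsqr; field; lra).
    destruct (polar_atan q (p / q) Hq) as [-> ->]. split; [field; lra | easy].
  - destruct (Rlt_dec q 0) as [Hq'|Hq'].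
    + rewrite Carg_im_neg by exact Hq'; simpl.
      replace (p / q) with (- p / - q) by (field; lra).
      replace (- (PI / 2) - atan (- p / - q)) with (- (PI / 2 - - atan (- p / - q))) by ring.
      rewrite cos_neg, sin_neg, cos_shift, sin_shift, sin_neg, cos_neg.
      replace (p * (p * 1) + q * (q * 1)) with (- q * - q * (1 + (- p / - q)²))
        by (unfold Rsqr; field; lra).
      destruct (polar_atan (- q) (- p / - q) ltac:(lra)) as [H1 H2].
      set (S := sqrt _) in *. set (A := atan _) in *.
      rewrite <- !Ropp_mult_distr_r, H1, H2. split; field; lra.
    + replace q with 0 in * by lra.
      assert (Hp' : p < 0) by (destruct (Req_dec p 0) as [->|]; [now contradict Hz | lra]).
      unfold Carg; simpl. destruct (Rlt_dec 0 p); [lra|]. destruct (Rlt_dec p 0); [|lra].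
      destruct (Rle_dec 0 0); [|lra].
      replace (0 / p) with 0 by (field; lra). rewrite atan_0, Rplus_0_l, cos_PI, sin_PI.
      replace (p * (p * 1) + 0 * (0 * 1)) with (- p * - p) by ring.
      rewrite sqrt_square by lra. split; ring.
Qed.

Lemma Csqrt_sqr (z : C) : (Csqrt z * Csqrt z)%C = z.
Proof.
  unfold Csqrt. destruct (Ceq_dec z 0) as [->|Hz]; [apply injective_projections; simpl; ring|].
  destruct (Cmod_cos_sin_Carg z Hz) as [Hre Him].
  pose proof (proj1 (Cmod_gt_0 z) Hz) as HM.
  assert (Ediv : Cdiv (Clog z) (RtoC 2) = (ln (Cmod z) / 2, Carg z / 2))
    by (unfold Clog, Cdiv, Cmult, Cinv; apply injective_projections; simpl; field).
  assert (Eexp : exp (ln (Cmod z) / 2) * exp (ln (Cmod z) / 2) = Cmod z)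
    by (rewrite <- exp_plus, <- exp_ln by exact HM; f_equal; field).
  assert (Ehalf : Carg z = 2 * (Carg z / 2)) by field.
  rewrite Ehalf in Hre, Him. rewrite Ediv. unfold Cexp. simpl.
  set (e := exp (ln (Cmod z) / 2)) in *. apply injective_projections; simpl.
  - rewrite <- Hre, cos_2a, <- Eexp. ring.
  - rewrite <- Him, sin_2a, <- Eexp. ring.
Qed.

(** * Differentiating the dilogarithm *)

Lemma slit_plane_segment (w : C) t :
  in_slit_plane (1 - w)%C -> 0 <= t <= 1 -> in_slit_plane (1 - RtoC t * w)%C.
Proof.
  destruct w as [w1 w2]; unfold in_slit_plane; simpl. intros [H|H] Ht.
  - left. assert (0 <= t * (1 - w1)) by (apply Rmult_le_pos; lra). nra.
  - destruct (Req_dec t 0) as [->|Ht0]; [left; lra|].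
    right. intro E. apply H. apply (Rmult_eq_reg_l t); [lra | exact Ht0].
Qed.

Lemma is_derive_C_affine (w : C) t : is_derive_C (fun s => 1 - RtoC s * w)%C t (- w)%C.
Proof.
  eapply is_derive_C_eq.
  - apply is_derive_C_minus; [apply is_derive_C_const|].
    apply is_derive_C_mult; [apply is_derive_C_RtoC | apply is_derive_C_const].
  - cbv beta. ring.
Qed.

Definition Li2_kernel (w : C) (t : R) : C := (/ (1 - RtoC t * w))%C.

Lemma continuous_C_Li2_kernel (w : C) t : in_slit_plane (1 - RtoC t * w)%C ->
  continuous_C (Li2_kernel w) t.
Proof.
  intros Hs. unfold Li2_kernel. eapply is_derive_C_continuous, is_derive_C_inv;
    [apply is_derive_C_affine | exact (slit_plane_neq0 _ Hs)].
Qed.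

Lemma ex_CRInt_Li2_kernel (w : C) : in_slit_plane (1 - w)%C -> ex_CRInt (Li2_kernel w) 0 1.
Proof.
  intros Hs. apply ex_CRInt_continuous; [lra|]. intros t Ht.
  now apply continuous_C_Li2_kernel, slit_plane_segment.
Qed.

Definition Li2_deriv (w : C) : C := CRInt (Li2_kernel w) 0 1.

Lemma Li2_deriv_eq (w : C) : w <> 0%C -> in_slit_plane (1 - w)%C ->
  Li2_deriv w = (- Clog (1 - w) / w)%C.
Proof.
  intros Hw Hs. unfold Li2_deriv.
  rewrite (CRInt_derive (fun s => - Clog (1 - RtoC s * w) / w)%C); [| lra | |].
  - replace (1 - RtoC 1 * w)%C with (1 - w)%C by ring.
    replace (1 - RtoC 0 * w)%C with (RtoC 1) by ring. rewrite Clog_1. field. exact Hw.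
  - intros t Ht. eapply is_derive_C_eq.
    + apply (is_derive_C_mult _ (fun _ => / w)%C); [|apply is_derive_C_const].
      apply is_derive_C_opp, is_derive_C_Clog; [apply is_derive_C_affine|].
      now apply slit_plane_segment.
    + cbv beta. unfold Li2_kernel. field. split; [|exact Hw].
      now apply slit_plane_neq0, slit_plane_segment.
  - intros t Ht. now apply continuous_C_Li2_kernel, slit_plane_segment.
Qed.

(* Division by zero makes [Li2_integrand w 0] equal to 0; replacing it by the limit -w gives an
   integrand that is jointly continuous, as differentiation under the integral sign requires. *)
Definition Li2_integrand_cont (w : C) (t : R) : C :=
  if Req_EM_T t 0 then (- w)%C else Li2_integrand w t.

Lemma Li2_eq_CRInt (w : C) : Li2 w = (- CRInt (Li2_integrand_cont w) 0 1)%C.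
Proof.
  change (Li2 w) with (- CRInt (Li2_integrand w) 0 1)%C. f_equal.
  apply CRInt_ext; [lra|]. intros t Ht.
  unfold Li2_integrand_cont. destruct Req_EM_T; [lra | reflexivity].
Qed.

Lemma is_derive_C_Li2_integrand_cont (z : R -> C) (d : C) u t :
  is_derive_C z u d -> in_slit_plane (1 - RtoC t * z u)%C ->
  is_derive_C (fun r => Li2_integrand_cont (z r) t) u (- d * Li2_kernel (z u) t)%C.
Proof.
  intros Hz Hs. unfold Li2_integrand_cont, Li2_integrand, Li2_kernel.
  destruct Req_EM_T as [->|Ht].
  - eapply is_derive_C_eq; [exact (is_derive_C_opp _ _ _ Hz)|].
    replace (1 - RtoC 0 * z u)%C with (RtoC 1) by ring. field.
  - eapply is_derive_C_eq.
    + apply (is_derive_C_mult _ (fun _ => / RtoC t)%C); [|apply is_derive_C_const].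
      apply is_derive_C_Clog; [|exact Hs].
      apply is_derive_C_minus; [apply is_derive_C_const|].
      apply (is_derive_C_mult (fun _ => RtoC t)); [apply is_derive_C_const | exact Hz].
    + cbv beta. field. split; [exact (slit_plane_neq0 _ Hs) | exact (RtoC_neq0 _ Ht)].
Qed.

Lemma Li2_integrand_cont_continuous (w : C) t : in_slit_plane (1 - w)%C -> 0 <= t <= 1 ->
  continuous_C (Li2_integrand_cont w) t.
Proof.
  intros Hs Ht. destruct (Req_dec t 0) as [->|Ht0].
  - assert (HD : is_derive_C (fun s => Clog (1 - RtoC s * w))%C 0 (- w)%C).
    { eapply is_derive_C_eq.
      - apply is_derive_C_Clog; [apply is_derive_C_affine | apply slit_plane_segment; [exact Hs | lra]].
      - cbv beta. replace (1 - RtoC 0 * w)%C with (RtoC 1) by ring. field. }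
    assert (H0 : Clog (1 - RtoC 0 * w)%C = 0%C)
      by (replace (1 - RtoC 0 * w)%C with (RtoC 1) by ring; exact Clog_1).
    destruct HD as [D1 D2]. apply is_derive_Reals in D1, D2.
    split; apply continuity_pt_filterlim.
    + eapply continuity_pt_ext; [|apply (continuity_pt_difference_quotient _ _ (f_equal fst H0) D1)].
      intros s. unfold Li2_integrand_cont, Li2_integrand. destruct Req_EM_T as [|Hs0]; [easy|].
      unfold Cdiv, Cmult, Cinv; simpl. field. exact Hs0.
    + eapply continuity_pt_ext; [|apply (continuity_pt_difference_quotient _ _ (f_equal snd H0) D2)].
      intros s. unfold Li2_integrand_cont, Li2_integrand. destruct Req_EM_T as [|Hs0]; [easy|].
      unfold Cdiv, Cmult, Cinv; simpl. field. exact Hs0.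
  - eapply is_derive_C_continuous, (is_derive_C_ext_loc (Li2_integrand w)).
    + apply (filter_imp (fun s => 0 < s)); [|apply continuous_locally_gt; [apply continuous_id | lra]].
      intros s Hs'. unfold Li2_integrand_cont. destruct Req_EM_T; [lra | reflexivity].
    + unfold Li2_integrand. apply is_derive_C_mult.
      * apply is_derive_C_Clog; [apply is_derive_C_affine | apply slit_plane_segment; [exact Hs | lra]].
      * apply is_derive_C_inv; [apply is_derive_C_RtoC | apply RtoC_neq0; lra].
Qed.

Lemma continuity_2d_pt_C_affine (z : R -> C) x t :
  continuous_C z x -> continuity_2d_pt_C (fun u v => 1 - RtoC v * z u)%C x t.
Proof.
  intros Hz. apply continuity_2d_pt_C_plus; [apply continuity_2d_pt_C_const|].
  apply continuity_2d_pt_C_opp, continuity_2d_pt_C_mult;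
    [apply continuity_2d_pt_C_RtoC_id2 | now apply continuity_2d_pt_C_comp1].
Qed.

Lemma is_derive_C_Li2 (z dz : R -> C) x :
  locally x (fun r => is_derive_C z r (dz r)) -> continuous_C dz x ->
  in_slit_plane (1 - z x)%C ->
  is_derive_C (fun r => Li2 (z r)) x (dz x * Li2_deriv (z x))%C.
Proof.
  intros Hz Hdz Hs.
  pose proof (is_derive_C_continuous _ _ _ (locally_singleton _ _ Hz)) as Hzc.
  assert (Hloc : locally x (fun r => is_derive_C z r (dz r) /\ in_slit_plane (1 - z r)%C)).
  { apply filter_and; [exact Hz|]. apply continuous_C_locally_slit_plane; [|exact Hs].
    eapply is_derive_C_continuous, is_derive_C_minus;
      [apply is_derive_C_const | exact (locally_singleton _ _ Hz)]. }
  apply (is_derive_C_ext_loc (fun r => - CRInt (Li2_integrand_cont (z r)) 0 1)%C).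
  { apply filter_forall. intros r. symmetry. apply Li2_eq_CRInt. }
  apply (is_derive_C_eq _ _ (- CRInt (fun t => - dz x * Li2_kernel (z x) t) 0 1)%C).
  2: { unfold Li2_deriv. rewrite CRInt_Cmult_l by exact (ex_CRInt_Li2_kernel _ Hs). ring. }
  apply is_derive_C_opp, (is_derive_C_RInt_param _ (fun r t => - dz r * Li2_kernel (z r) t)%C);
    [lra | | | |].
  - eapply filter_imp; [|exact Hloc]. intros r [Hr Hsr] t Ht.
    apply is_derive_C_Li2_integrand_cont; [exact Hr | now apply slit_plane_segment].
  - intros t Ht.
    assert (HN : locally_2d (fun u v => in_slit_plane (1 - RtoC v * z u)%C) x t).
    { apply continuity_2d_pt_C_locally_slit_plane;
        [now apply continuity_2d_pt_C_affine | now apply slit_plane_segment]. }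
    eapply locally_2d_impl; [|exact (locally_2d_and _ _ _ _ (locally_locally_2d _ x t Hz) HN)].
    apply locally_2d_forall. intros u v [Hu Hv]. now apply is_derive_C_Li2_integrand_cont.
  - intros t Ht. apply continuity_2d_pt_C_mult.
    + apply continuity_2d_pt_C_opp, continuity_2d_pt_C_comp1, Hdz.
    + unfold Li2_kernel. apply continuity_2d_pt_C_inv; [now apply continuity_2d_pt_C_affine|].
      now apply slit_plane_neq0, slit_plane_segment.
  - eapply filter_imp; [|exact Hloc]. intros r [_ Hr].
    apply ex_CRInt_continuous; [lra|]. intros t Ht. now apply Li2_integrand_cont_continuous.
Qed.

Lemma Li2_0 : Li2 0%C = 0%C.
Proof.
  change (Li2 0%C) with (- CRInt (Li2_integrand 0%C) 0 1)%C.
  rewrite (CRInt_ext _ (fun _ => 0%C)); [|lra|].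
  - unfold CRInt. simpl. rewrite RInt_const.
    apply injective_projections; simpl; unfold scal; simpl; unfold mult; simpl; ring.
  - intros t Ht. unfold Li2_integrand.
    replace (1 - RtoC t * 0)%C with (RtoC 1) by ring. rewrite Clog_1.
    apply injective_projections; simpl; field; lra.
Qed.

(** * The two-term identity *)

Definition Aarg (x : C) : C := (x - x * x)%C.
Definition Barg (x : C) : C := ((x - 1) * / (x * x))%C.
Definition Cfac (x : C) : C := (x + / x - 1)%C.

Lemma one_minus_Aarg (x : C) : x <> 0%C -> (1 - Aarg x = x * Cfac x)%C.
Proof. intros; unfold Aarg, Cfac; field; assumption. Qed.

Lemma one_minus_Barg (x : C) : x <> 0%C -> (1 - Barg x = Cfac x * / x)%C.
Proof. intros; unfold Barg, Cfac; field; assumption. Qed.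

Lemma one_minus_Aarg_Barg (x : C) : x <> 0%C -> (1 - Aarg x * Barg x = Cfac x)%C.
Proof. intros; unfold Aarg, Barg, Cfac; field; assumption. Qed.

Lemma Barg_eq_Aarg_Cinv (z : C) : z <> 0%C -> Barg z = Aarg (/ z).
Proof. intros Hz. unfold Aarg, Barg. field. exact Hz. Qed.

Lemma Aarg_neq0 (z : C) : z <> 0%C -> (1 - z)%C <> 0%C -> Aarg z <> 0%C.
Proof.
  intros H0 H1. replace (Aarg z) with (z * (1 - z))%C by (unfold Aarg; ring).
  now apply Cmult_neq_0.
Qed.

Lemma Barg_neq0 (z : C) : z <> 0%C -> (1 - z)%C <> 0%C -> Barg z <> 0%C.
Proof.
  intros H0 H1. apply Cmult_neq_0; [|now apply Cinv_neq0, Cmult_neq_0].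
  intro E. apply H1. replace (1 - z)%C with (- (z - 1))%C by ring. rewrite E. ring.
Qed.

Definition Cfac_numerator (p q : R) : R := (p - 1) * (p * p + q * q) + p.

Lemma Cfac_re (p q : R) : 0 < p -> fst (Cfac (p, q)) = Cfac_numerator p q / (p * p + q * q).
Proof. intros Hp. unfold Cfac, Cfac_numerator; simpl. field. nra. Qed.

Lemma Cfac_re_pos_re_pos (x : C) : 0 < fst (Cfac x) -> 0 < fst x.
Proof.
  destruct x as [p q]; unfold Cfac; simpl. intros H.
  destruct (Rlt_le_dec 0 p) as [Hp|Hp]; [exact Hp|exfalso].
  assert (p / (p * (p * 1) + q * (q * 1)) <= 0); [|lra].
  destruct (Req_dec (p * (p * 1) + q * (q * 1)) 0) as [E|E].
  - rewrite E. unfold Rdiv. rewrite Rinv_0, Rmult_0_r. lra.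
  - assert (0 < / (p * (p * 1) + q * (q * 1))) by (apply Rinv_0_lt_compat; nra).
    unfold Rdiv. nra.
Qed.

Lemma Cfac_numerator_segment p q r : 0 < p -> 0 < Cfac_numerator p q -> 0 <= r <= 1 ->
  0 < Cfac_numerator (1 + r * (p - 1)) (r * q).
Proof.
  unfold Cfac_numerator. intros Hp H Hr.
  destruct (Rle_dec 1 p) as [H1|H1].
  - assert (0 <= r * (p - 1)) by (apply Rmult_le_pos; lra).
    assert (0 <= (1 + r * (p - 1) - 1) * ((1 + r * (p - 1)) * (1 + r * (p - 1)) + r * q * (r * q)))
      by (apply Rmult_le_pos; nra).
    lra.
  - set (e := 1 - p). assert (He : 0 < e < 1) by (unfold e; lra).
    (* With p = 1 - e the numerator is N e - e q^2; moving towards 1 scales (e, q) by r,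
       which does not decrease N and does not increase e q^2. *)
    set (N := fun y => 1 - 2 * y + 2 * y * y - y * y * y).
    replace ((1 + r * (p - 1) - 1) * ((1 + r * (p - 1)) * (1 + r * (p - 1)) + r * q * (r * q))
             + (1 + r * (p - 1))) with (N (r * e) - r * r * r * e * q * q) by (unfold N, e; ring).
    replace ((p - 1) * (p * p + q * q) + p) with (N e - e * q * q) in H by (unfold N, e; ring).
    assert (HN : N e <= N (r * e)).
    { replace (N e) with (N (r * e) - (e - r * e) * ((1 - r * e - e) * (1 - r * e - e) + 1 - r * e * e))
        by (unfold N; ring).
      assert (0 <= e - r * e) by nra. assert (r * e * e < 1) by nra.
      assert (0 <= (1 - r * e - e) * (1 - r * e - e)) by apply Rle_0_sqr.
      assert (0 <= (e - r * e) * ((1 - r * e - e) * (1 - r * e - e) + 1 - r * e * e))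
        by (apply Rmult_le_pos; lra).
      lra. }
    assert (r * r * r * (e * q * q) <= e * q * q).
    { assert (0 <= e * q * q) by nra. assert (r * r * r <= 1) by nra. nra. }
    nra.
Qed.

Definition seg (x : C) (r : R) : C := (1 + RtoC r * (x - 1))%C.

Lemma seg_0 (x : C) : seg x 0 = RtoC 1.
Proof. unfold seg. apply injective_projections; simpl; ring. Qed.

Lemma seg_1 (x : C) : seg x 1 = x.
Proof. unfold seg. apply injective_projections; simpl; ring. Qed.

Lemma Cfac_re_pos_segment (x : C) r : 0 < fst (Cfac x) -> 0 <= r <= 1 ->
  0 < fst (seg x r) /\ 0 < fst (Cfac (seg x r)).
Proof.
  intros Hx Hr. pose proof (Cfac_re_pos_re_pos _ Hx) as Hp.
  destruct x as [p q]. simpl in Hp. rewrite Cfac_re in Hx by exact Hp.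
  assert (HN : 0 < Cfac_numerator p q).
  { assert (0 < p * p + q * q) by nra. apply Rdiv_pos_cases in Hx. destruct Hx; [easy | lra]. }
  replace (seg (p, q) r) with (1 + r * (p - 1), r * q)
    by (unfold seg; apply injective_projections; simpl; ring).
  assert (H1 : 0 < 1 + r * (p - 1)) by nra. split; [exact H1|].
  rewrite Cfac_re by exact H1.
  apply Rdiv_lt_0_compat; [now apply Cfac_numerator_segment | nra].
Qed.

Lemma is_derive_C_seg (x : C) r : is_derive_C (seg x) r (x - 1)%C.
Proof.
  eapply is_derive_C_eq.
  - apply is_derive_C_plus; [apply is_derive_C_const|].
    apply (is_derive_C_mult RtoC (fun _ => x - 1)%C);
      [apply is_derive_C_RtoC | apply is_derive_C_const].
  - cbv beta. ring.
Qed.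

Lemma seg_re_pos (x : C) r : 0 < fst x -> 0 <= r <= 1 -> 0 < fst (seg x r).
Proof. destruct x as [p q]; simpl. intros. nra. Qed.

Lemma is_derive_C_Cinv_seg (x : C) r : 0 < fst (seg x r) ->
  is_derive_C (fun s => / seg x s)%C r (- (x - 1) / (seg x r * seg x r))%C.
Proof.
  intros H. apply is_derive_C_inv; [apply is_derive_C_seg | now apply re_pos_neq0].
Qed.

Lemma is_derive_C_Cfac (f : R -> C) r (l : C) : is_derive_C f r l -> f r <> 0%C ->
  is_derive_C (fun s => Cfac (f s)) r (l * (1 - / (f r * f r)))%C.
Proof.
  intros Hf Hn. eapply is_derive_C_eq.
  - apply is_derive_C_minus; [apply is_derive_C_plus|apply is_derive_C_const];
      [exact Hf | exact (is_derive_C_inv _ _ _ Hf Hn)].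
  - field. exact Hn.
Qed.

Lemma Clog_Cinv (x : C) : 0 < fst x -> Clog (/ x) = (- Clog x)%C.
Proof.
  intros Hx.
  assert (H : Clog (seg x 1 * / seg x 1) = (Clog (seg x 1) + Clog (/ seg x 1))%C).
  { apply (Clog_mult_along_path (seg x) (fun s => / seg x s)%C (fun _ => x - 1)%C
             (fun s => - (x - 1) / (seg x s * seg x s))%C 0 1); [| | apply seg_0 | | lra].
    - intros r Hr. split; [apply is_derive_C_seg | apply is_derive_C_Cinv_seg, seg_re_pos; assumption].
    - intros r Hr. pose proof (seg_re_pos x r Hx Hr). split; [assumption | now apply re_inv_pos].
    - rewrite seg_0. apply injective_projections; simpl; field. }
  rewrite seg_1, Cinv_r, Clog_1 in H by exact (slit_plane_neq0 _ (slit_plane_re_pos _ Hx)).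
  rewrite <- (Cplus_0_l (- Clog x)), H. ring.
Qed.

Lemma Cfac_1 : Cfac (RtoC 1) = RtoC 1.
Proof. unfold Cfac. field. Qed.

Lemma is_derive_C_Cfac_seg (x : C) r : 0 < fst (seg x r) ->
  is_derive_C (fun s => Cfac (seg x s)) r ((x - 1) * (1 - / (seg x r * seg x r)))%C.
Proof. intros H. apply is_derive_C_Cfac; [apply is_derive_C_seg | now apply re_pos_neq0]. Qed.

Lemma Clog_one_minus_Aarg (x : C) : 0 < fst (Cfac x) ->
  Clog (1 - Aarg x) = (Clog x + Clog (Cfac x))%C.
Proof.
  intros Hx. rewrite one_minus_Aarg by now apply re_pos_neq0, Cfac_re_pos_re_pos.
  rewrite <- (seg_1 x).
  apply (Clog_mult_along_path (seg x) (fun s => Cfac (seg x s)) (fun _ => x - 1)%C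
           (fun s => (x - 1) * (1 - / (seg x s * seg x s)))%C 0 1);
    [| | apply seg_0 | rewrite seg_0; apply Cfac_1 | lra].
  - intros r Hr. split; [apply is_derive_C_seg|].
    apply is_derive_C_Cfac_seg, (Cfac_re_pos_segment x r Hx Hr).
  - intros r Hr. exact (Cfac_re_pos_segment x r Hx Hr).
Qed.

Lemma Clog_one_minus_Barg (x : C) : 0 < fst (Cfac x) ->
  Clog (1 - Barg x) = (Clog (Cfac x) - Clog x)%C.
Proof.
  intros Hx. pose proof (Cfac_re_pos_re_pos _ Hx) as Hre.
  rewrite one_minus_Barg by now apply re_pos_neq0.
  unfold Cminus. rewrite <- (Clog_Cinv x Hre), <- (seg_1 x).
  apply (Clog_mult_along_path (fun s => Cfac (seg x s)) (fun s => / seg x s)%C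
           (fun s => (x - 1) * (1 - / (seg x s * seg x s)))%C
           (fun s => - (x - 1) / (seg x s * seg x s))%C 0 1);
    [| | rewrite seg_0; apply Cfac_1 | rewrite seg_0; apply injective_projections; simpl; field | lra].
  - intros r Hr. destruct (Cfac_re_pos_segment x r Hx Hr) as [H1 _].
    split; [now apply is_derive_C_Cfac_seg | now apply is_derive_C_Cinv_seg].
  - intros r Hr. destruct (Cfac_re_pos_segment x r Hx Hr) as [H1 H2].
    split; [exact H2 | now apply re_inv_pos].
Qed.

Lemma slit_plane_one_minus_Aarg (z : C) : 0 < fst (Cfac z) -> in_slit_plane (1 - Aarg z)%C.
Proof.
  intros Hz. pose proof (Cfac_re_pos_re_pos _ Hz) as H.
  rewrite one_minus_Aarg by now apply re_pos_neq0. now apply slit_plane_mult_re_pos.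
Qed.

Lemma slit_plane_one_minus_Barg (z : C) : 0 < fst (Cfac z) -> in_slit_plane (1 - Barg z)%C.
Proof.
  intros Hz. pose proof (Cfac_re_pos_re_pos _ Hz) as H.
  rewrite one_minus_Barg by now apply re_pos_neq0. now apply slit_plane_mult_re_pos, re_inv_pos.
Qed.

Lemma slit_plane_one_minus_Aarg_Barg (z : C) : 0 < fst (Cfac z) ->
  in_slit_plane (1 - Aarg z * Barg z)%C.
Proof.
  intros Hz. pose proof (Cfac_re_pos_re_pos _ Hz) as H.
  rewrite one_minus_Aarg_Barg by now apply re_pos_neq0. now apply slit_plane_re_pos.
Qed.

Lemma Li2_deriv_Aarg (z : C) : 0 < fst (Cfac z) -> (1 - z)%C <> 0%C ->
  Li2_deriv (Aarg z) = (- (Clog z + Clog (Cfac z)) / Aarg z)%C.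
Proof.
  intros Hz H1. pose proof (re_pos_neq0 _ (Cfac_re_pos_re_pos _ Hz)) as H0.
  rewrite Li2_deriv_eq, Clog_one_minus_Aarg; auto using Aarg_neq0, slit_plane_one_minus_Aarg.
Qed.

Lemma Li2_deriv_Barg (z : C) : 0 < fst (Cfac z) -> (1 - z)%C <> 0%C ->
  Li2_deriv (Barg z) = (- (Clog (Cfac z) - Clog z) / Barg z)%C.
Proof.
  intros Hz H1. pose proof (re_pos_neq0 _ (Cfac_re_pos_re_pos _ Hz)) as H0.
  rewrite Li2_deriv_eq, Clog_one_minus_Barg; auto using Barg_neq0, slit_plane_one_minus_Barg.
Qed.

Lemma Li2_deriv_Aarg_Barg (z : C) : 0 < fst (Cfac z) -> (1 - z)%C <> 0%C ->
  Li2_deriv (Aarg z * Barg z) = (- Clog (Cfac z) / (Aarg z * Barg z))%C.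
Proof.
  intros Hz H1. pose proof (re_pos_neq0 _ (Cfac_re_pos_re_pos _ Hz)) as H0.
  rewrite Li2_deriv_eq, one_minus_Aarg_Barg;
    auto using Cmult_neq_0, Aarg_neq0, Barg_neq0, slit_plane_one_minus_Aarg_Barg.
Qed.

Lemma one_minus_seg_neq0 (x : C) r : x <> RtoC 1 -> r <> 0 -> (1 - seg x r)%C <> 0%C.
Proof.
  intros Hx Hr. replace (1 - seg x r)%C with (RtoC r * (1 - x))%C by (unfold seg; ring).
  apply Cmult_neq_0; [now apply RtoC_neq0|]. intro E. apply Hx.
  replace x with (1 - (1 - x))%C by ring. rewrite E. ring.
Qed.

Lemma is_derive_C_Aarg (f : R -> C) r (l : C) : is_derive_C f r l ->
  is_derive_C (fun s => Aarg (f s)) r (l * (1 - 2 * f r))%C.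
Proof.
  intros Hf. eapply is_derive_C_eq.
  - apply is_derive_C_minus; [exact Hf | exact (is_derive_C_mult _ _ _ _ _ Hf Hf)].
  - ring.
Qed.

Lemma is_derive_C_Barg (f : R -> C) r (l : C) : is_derive_C f r l -> f r <> 0%C ->
  is_derive_C (fun s => Barg (f s)) r (l * (2 - f r) * / (f r * f r * f r))%C.
Proof.
  intros Hf Hn. eapply is_derive_C_eq.
  - apply is_derive_C_mult; [apply (is_derive_C_minus _ _ _ _ _ Hf (is_derive_C_const _ _))|].
    apply is_derive_C_inv; [exact (is_derive_C_mult _ _ _ _ _ Hf Hf) | now apply Cmult_neq_0].
  - cbv beta. field. exact Hn.
Qed.

Section TwoTermIdentity.

Variable x : C.
Hypothesis Hx : 0 < fst (Cfac x).

Definition dAarg (r : R) : C := ((x - 1) * (1 - 2 * seg x r))%C.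
Definition dBarg (r : R) : C := ((x - 1) * (2 - seg x r) * / (seg x r * seg x r * seg x r))%C.
Definition dAB (r : R) : C := (dAarg r * Barg (seg x r) + Aarg (seg x r) * dBarg r)%C.

Lemma is_derive_C_Aarg_seg r : is_derive_C (fun s => Aarg (seg x s)) r (dAarg r).
Proof. apply is_derive_C_Aarg, is_derive_C_seg. Qed.

Lemma is_derive_C_Barg_seg r : 0 < fst (seg x r) ->
  is_derive_C (fun s => Barg (seg x s)) r (dBarg r).
Proof. intros H. apply is_derive_C_Barg; [apply is_derive_C_seg | now apply re_pos_neq0]. Qed.

Lemma is_derive_C_AB_seg r : 0 < fst (seg x r) ->
  is_derive_C (fun s => Aarg (seg x s) * Barg (seg x s))%C r (dAB r).
Proof.
  intros H. apply is_derive_C_mult; [apply is_derive_C_Aarg_seg | now apply is_derive_C_Barg_seg].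
Qed.

Lemma ex_is_derive_C_dAarg r : exists l, is_derive_C dAarg r l.
Proof.
  eexists. apply (is_derive_C_mult (fun _ => x - 1)%C); [apply is_derive_C_const|].
  apply is_derive_C_minus; [apply is_derive_C_const|].
  apply (is_derive_C_mult (fun _ => RtoC 2)); [apply is_derive_C_const | apply is_derive_C_seg].
Qed.

Lemma ex_is_derive_C_dBarg r : 0 < fst (seg x r) -> exists l, is_derive_C dBarg r l.
Proof.
  intros H. pose proof (re_pos_neq0 _ H). eexists. apply is_derive_C_mult.
  - apply (is_derive_C_mult (fun _ => x - 1)%C); [apply is_derive_C_const|].
    apply is_derive_C_minus; [apply is_derive_C_const | apply is_derive_C_seg].
  - apply is_derive_C_inv; [|now repeat apply Cmult_neq_0].
    apply is_derive_C_mult; [apply is_derive_C_mult|]; apply is_derive_C_seg.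
Qed.

Lemma continuous_C_dAB r : 0 < fst (seg x r) -> continuous_C dAB r.
Proof.
  intros H. destruct (ex_is_derive_C_dAarg r) as [la Ha], (ex_is_derive_C_dBarg r H) as [lb Hb].
  eapply is_derive_C_continuous, is_derive_C_plus; apply is_derive_C_mult;
    eauto using is_derive_C_Aarg_seg, is_derive_C_Barg_seg.
Qed.

Definition dilog_defect (r : R) : C :=
  (- Li2 (Aarg (seg x r)) - Li2 (Barg (seg x r))
   - RtoC (3 / 2) * (Clog (seg x r) * Clog (seg x r))
   + Li2 (Aarg (seg x r) * Barg (seg x r)))%C.

Definition dilog_defect_deriv (r : R) : C :=
  (- (dAarg r * Li2_deriv (Aarg (seg x r))) - dBarg r * Li2_deriv (Barg (seg x r))
   - RtoC (3 / 2) * (2 * ((x - 1) / seg x r * Clog (seg x r)))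
   + dAB r * Li2_deriv (Aarg (seg x r) * Barg (seg x r)))%C.

Lemma is_derive_C_dilog_defect r : 0 <= r <= 1 -> is_derive_C dilog_defect r (dilog_defect_deriv r).
Proof.
  intros Hr. destruct (Cfac_re_pos_segment x r Hx Hr) as [HX HC].
  pose proof (re_pos_neq0 _ HX) as HX0.
  assert (Hloc : locally r (fun s => 0 < fst (seg x s))).
  { apply continuous_locally_gt; [|exact HX].
    exact (proj1 (is_derive_C_continuous _ _ _ (is_derive_C_seg x r))). }
  eapply is_derive_C_eq.
  - apply is_derive_C_plus;
      [apply is_derive_C_minus; [apply is_derive_C_minus; [apply is_derive_C_opp|]|]|].
    + apply (is_derive_C_Li2 _ dAarg).
      * apply filter_forall, is_derive_C_Aarg_seg.
      * destruct (ex_is_derive_C_dAarg r) as [l Hl]. exact (is_derive_C_continuous _ _ _ Hl).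
      * now apply slit_plane_one_minus_Aarg.
    + apply (is_derive_C_Li2 _ dBarg).
      * apply (filter_imp _ _ (is_derive_C_Barg_seg) Hloc).
      * destruct (ex_is_derive_C_dBarg r HX) as [l Hl]. exact (is_derive_C_continuous _ _ _ Hl).
      * now apply slit_plane_one_minus_Barg.
    + apply (is_derive_C_mult (fun _ => RtoC (3 / 2))); [apply is_derive_C_const|].
      apply is_derive_C_mult; apply is_derive_C_Clog;
        solve [apply is_derive_C_seg | now apply slit_plane_re_pos].
    + apply (is_derive_C_Li2 _ dAB).
      * apply (filter_imp _ _ (is_derive_C_AB_seg) Hloc).
      * now apply continuous_C_dAB.
      * now apply slit_plane_one_minus_Aarg_Barg.
  - unfold dilog_defect_deriv. cbv beta. field. exact HX0.
Qed.

Lemma dilog_defect_deriv_zero r : 0 < r < 1 -> dilog_defect_deriv r = 0%C.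
Proof.
  intros Hr. destruct (Cfac_re_pos_segment x r Hx ltac:(lra)) as [HX HC].
  pose proof (re_pos_neq0 _ HX) as HX0.
  destruct (Ceq_dec x 1) as [E|Hx1].
  { unfold dilog_defect_deriv, dAB, dAarg, dBarg. rewrite E. field. now rewrite <- E. }
  pose proof (one_minus_seg_neq0 x r Hx1 ltac:(lra)) as HX1.
  unfold dilog_defect_deriv.
  rewrite Li2_deriv_Aarg, Li2_deriv_Barg, Li2_deriv_Aarg_Barg by assumption.
  pose proof (Aarg_neq0 _ HX0 HX1) as HA0. pose proof (Barg_neq0 _ HX0 HX1) as HB0.
  unfold dAB, dAarg, dBarg, Aarg, Barg in *. set (X := seg x r) in *.
  replace (RtoC (3 / 2)) with (3 / 2)%C by (apply injective_projections; simpl; field).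
  assert (HX1' : (X - 1)%C <> 0%C)
    by (intro E; apply HX1; replace (1 - X)%C with (- (X - 1))%C by ring; rewrite E; ring).
  field. repeat split; assumption.
Qed.

Lemma dilog_defect_1 : dilog_defect 1 = 0%C.
Proof.
  rewrite (is_derive_C_zero_const dilog_defect 0 1).
  - unfold dilog_defect. rewrite seg_0.
    replace (Aarg (RtoC 1)) with (RtoC 0) by (unfold Aarg; ring).
    replace (Barg (RtoC 1)) with (RtoC 0) by (unfold Barg; field).
    rewrite Cmult_0_l, Li2_0, Clog_1. ring.
  - intros r Hr. eexists. now apply is_derive_C_dilog_defect.
  - intros r Hr. rewrite <- (dilog_defect_deriv_zero r Hr).
    apply is_derive_C_dilog_defect. lra.
  - lra.
Qed.

End TwoTermIdentity.

Lemma two_term_dilog_identity (x : C) : 0 < fst (Cfac x) ->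
  (- Li2 (Aarg x) - Li2 (Barg x))%C = (RtoC (3 / 2) * (Clog x * Clog x) - Li2 (Aarg x * Barg x))%C.
Proof.
  intros Hx. pose proof (dilog_defect_1 x Hx) as E. unfold dilog_defect in E. rewrite seg_1 in E.
  transitivity (RtoC (3 / 2) * (Clog x * Clog x) - Li2 (Aarg x * Barg x) + 0)%C.
  - rewrite <- E. ring.
  - ring.
Qed.

(** * The substitution *)

Section Substitution.

Variables u s : C.
Hypothesis Hu : (u - 1)%C <> 0%C.
Hypothesis Hs : (s * s = u * (4 - 3 * u))%C.

Definition root (v : C) : C := ((u - 2 + v) / (2 * (u - 1)))%C.

Lemma root_mul_root_opp : (root s * root (- s) = 1)%C.
Proof.
  transitivity (1 + (u * (4 - 3 * u) - s * s) / (4 * (u - 1) * (u - 1)))%C.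
  - unfold root. field. exact Hu.
  - rewrite Hs. field. exact Hu.
Qed.

Lemma root_neq0 : root s <> 0%C.
Proof.
  intro E. pose proof root_mul_root_opp as H. rewrite E, Cmult_0_l in H.
  apply R1_neq_R0. symmetry. exact (f_equal fst H).
Qed.

Lemma Cinv_root : (/ root s)%C = root (- s).
Proof.
  rewrite <- (Cmult_1_r (/ root s)), <- root_mul_root_opp.
  field. exact root_neq0.
Qed.

Lemma Aarg_root (v : C) : (v * v = u * (4 - 3 * u))%C ->
  Aarg (root v) = ((2 * u ^ 2 - 3 * u + v) / (2 * (u - 1) ^ 2))%C.
Proof.
  intros Hv. transitivity ((2 * u ^ 2 - 3 * u + v) / (2 * (u - 1) ^ 2)
                           + (u * (4 - 3 * u) - v * v) / (4 * (u - 1) ^ 2))%C.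
  - unfold Aarg, root. field. exact Hu.
  - rewrite Hv. field. exact Hu.
Qed.

Lemma Barg_root : Barg (root s) = ((2 * u ^ 2 - 3 * u - s) / (2 * (u - 1) ^ 2))%C.
Proof.
  rewrite Barg_eq_Aarg_Cinv, Cinv_root, Aarg_root by (exact root_neq0 || (rewrite <- Hs; ring)).
  unfold Cminus. reflexivity.
Qed.

Lemma Cfac_root : Cfac (root s) = (/ (1 - u))%C.
Proof.
  assert (H1 : (1 - u)%C <> 0%C)
    by (intro E; apply Hu; replace (u - 1)%C with (- (1 - u))%C by ring; rewrite E; ring).
  unfold Cfac. rewrite Cinv_root. unfold root. field. now split.
Qed.

Lemma Aarg_Barg_root : (Aarg (root s) * Barg (root s) = u / (u - 1))%C.
Proof.
  rewrite Aarg_root, Barg_root by exact Hs.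
  transitivity (u / (u - 1) + (u * (4 - 3 * u) - s * s) / (4 * (u - 1) ^ 4))%C.
  - field. exact Hu.
  - rewrite Hs. field. exact Hu.
Qed.

End Substitution.

Theorem theorem3 (u : C) (hu : (Cmod u < 1)%R) :
  let s1 := Csqrt (u * (4 - 3 * u))%C in
  let s2 := Csqrt ((4 - 3 * u) * u)%C in
  (- Li2 ((2 * u ^ 2 - 3 * u + s1) / (2 * (u - 1) ^ 2))
   - Li2 ((2 * u ^ 2 - 3 * u - s1) / (2 * (u - 1) ^ 2)))%C
  = (RtoC (3 / 2) * (Clog (1 - (u - s2) / (2 * (u - 1)))) ^ 2
     - Li2 (u / (u - 1)))%C.
Proof.
  intros s1 s2.
  replace s2 with s1 by (unfold s1, s2; now rewrite Cmult_comm).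
  pose proof (Csqrt_sqr (u * (4 - 3 * u))) as Hs. fold s1 in Hs. clearbody s1.
  assert (Hu : (u - 1)%C <> 0%C).
  { pose proof (Cmod_lt_1_re_lt_1 u hu). intro E. apply (f_equal fst) in E. simpl in E. lra. }
  replace (1 - (u - s1) / (2 * (u - 1)))%C with (root u s1) by (unfold root; field; exact Hu).
  rewrite <- (Aarg_root u Hu s1 Hs), <- (Barg_root u s1 Hu Hs), <- (Aarg_Barg_root u s1 Hu Hs).
  replace (Clog (root u s1) ^ 2)%C with (Clog (root u s1) * Clog (root u s1))%C by (simpl; ring).
  apply two_term_dilog_identity.
  rewrite (Cfac_root u s1 Hu Hs). apply re_inv_pos.
  pose proof (Cmod_lt_1_re_lt_1 u hu). simpl. lra.
Qed.
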